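(* Consider an instance of the Profile Matching Problem (defined in the context). Fix a profile $\mathbf{a}\in Q_k$, let $\mathcal{M}_\mathbf{a}$ and $\mathcal{W}_\mathbf{a}$ be the sets of men and of women whose profile equals $\mathbf{a}$, and suppose $|\mathcal{M}_\mathbf{a}|\le|\mathcal{W}_\mathbf{a}|$. Then in every stable matching, each man in $\mathcal{M}_\mathbf{a}$ is matched to a woman in $\mathcal{W}_\mathbf{a}$.
   Context: Profile Matching Problem: a set $\mathcal{M}$ of $n$ men and a set $\mathcal{W}$ of $n$ women; each participant $x$ has a profile $\mathbf{a}(x)\in Q_k=\{0,1\}^k$. The distance $d$ on $Q_k$ is either the Hamming distance $d_h(\mathbf{a},\mathbf{a}')=\sum_{i=1}^k\mathbf{1}(a_i\ne a_i')$ or the Weighted Hamming distance $d_w(\mathbf{a},\mathbf{a}')=\sum_{i=1}^k2^{-i}\mathbf{1}(a_i\ne a_i')$; $d(x,y)=d(\mathbf{a}(x),\mathbf{a}(y))$. Each participant $x$ has a tie-breaking list $T_x$ (a strict order on the opposite sex); the strict preference list of $x$ ranks the opposite sex in increasing order of $d(x,\cdot)$, ties broken by $T_x$. A matching pairs each man with at most one woman and vice versa; $(m,w)$ is a blocking pair if each strictly prefers the other to his/her partner in the matching; a matching is stable if it has no blocking pair. *)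

From mathcomp Require Import all_boot all_order all_algebra.
From mathcomp Require Import perm.
Set Implicit Arguments. Unset Strict Implicit. Unset Printing Implicit Defensive.
Import Order.TTheory GRing.Theory Num.Theory.
Local Open Scope ring_scope.

(* Profiles: elements of Q_k = {0,1}^k, coordinates indexed 1..k by 'I_k
   (coordinate i : 'I_k is the paper's coordinate i+1). *)
Definition profile (k : nat) := {ffun 'I_k -> bool}.

Inductive dist_kind := Hamming | WeightedHamming.

Definition hamming (k : nat) (a b : profile k) : rat :=
  \sum_(i < k) (a i != b i)%:R.

(* d_w(a,b) = sum_{i=1}^k 2^{-i} 1(a_i <> b_i); index i : 'I_k is i+1. *)
Definition weighted_hamming (k : nat) (a b : profile k) : rat :=
  \sum_(i < k) (a i != b i)%:R / 2%:R ^+ i.+1.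

Definition pdist (dk : dist_kind) (k : nat) (a b : profile k) : rat :=
  match dk with
  | Hamming => hamming a b
  | WeightedHamming => weighted_hamming a b
  end.

(* An instance: n men and n women (both indexed by 'I_n), profiles, and
   tie-breaking lists given as strict orders: T x y is the position of y in
   x's tie-breaking list (a bijection, so a strict total order). *)
Record instance (n k : nat) := Instance {
  profM : 'I_n -> profile k;
  profW : 'I_n -> profile k;
  tieM : 'I_n -> {perm 'I_n};
  tieW : 'I_n -> {perm 'I_n}
}.

Section Prefs.
Variables (dk : dist_kind) (n k : nat) (I : instance n k).

Definition man_prefers (m w w' : 'I_n) : bool :=
  let d := pdist dk (profM I m) in
  (d (profW I w) < d (profW I w')) ||
  ((d (profW I w) == d (profW I w')) && (tieM I m w < tieM I m w')%N).

Definition woman_prefers (w m m' : 'I_n) : bool :=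
  let d := pdist dk (profW I w) in
  (d (profM I m) < d (profM I m')) ||
  ((d (profM I m) == d (profM I m')) && (tieW I w m < tieW I w m')%N).

Definition is_matching (mu : 'I_n -> option 'I_n) : Prop :=
  forall m m' w, mu m = Some w -> mu m' = Some w -> m = m'.

(* Strict preference over the current (possibly absent) partner:
   being matched to anyone is preferred to being unmatched. *)
Definition man_prefers_to_partner (mu : 'I_n -> option 'I_n) (m w : 'I_n) : Prop :=
  match mu m with
  | None => True
  | Some w' => man_prefers m w w'
  end.

Definition woman_prefers_to_partner (mu : 'I_n -> option 'I_n) (w m : 'I_n) : Prop :=
  (forall m', mu m' <> Some w) \/
  (exists m', mu m' = Some w /\ woman_prefers w m m').

Definition blocking_pair (mu : 'I_n -> option 'I_n) (m w : 'I_n) : Prop :=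
  man_prefers_to_partner mu m w /\ woman_prefers_to_partner mu w m.

Definition stable (mu : 'I_n -> option 'I_n) : Prop :=
  is_matching mu /\ forall m w, ~ blocking_pair mu m w.

End Prefs.

(* If a man m of profile a is not matched to a woman of profile a, then fewer
   than |M_a| <= |W_a| women of profile a are partners of men of profile a, so
   some woman w of profile a has no partner of profile a.  Then m and w are at
   distance 0 from each other and at positive distance from their partners (if
   any), so (m, w) is a blocking pair.  The count does not need the matching
   to be injective. *)
From mathcomp Require Import all_boot all_order all_algebra.
From mathcomp Require Import perm.
Set Implicit Arguments. Unset Strict Implicit. Unset Printing Implicit Defensive.
Import Order.TTheory GRing.Theory Num.Theory.

Lemma exists_notin_imset_Some (T U : finType) (f : T -> option U)
    (A : {set T}) (B : {set U}) :
  #|A| <= #|B| -> (exists2 x, x \in A & f x \notin Some @: B) ->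
  exists2 y, y \in B & Some y \notin f @: A.
Proof.
move=> le_AB [x Ax fxB]; apply/exists_inP; apply: contraTT fxB.
move=> /exists_inPn hitB; have sub_B_fA : Some @: B \subset f @: A.
  by apply/subsetP => _ /imsetP[y By ->]; apply/negPn/hitB.
have le_fA_B : #|f @: A| <= #|Some @: B|.
  by rewrite (card_imset _ Some_inj) (leq_trans (leq_imset_card _ _) le_AB).
have /eqP -> : Some @: B == f @: A by rewrite eqEcard sub_B_fA le_fA_B.
by rewrite negbK imset_f.
Qed.

Section SameProfile.
Local Open Scope ring_scope.

Lemma pdistxx dk k (a : profile k) : pdist dk a a = 0.
Proof.
by case: dk; rewrite /= /hamming /weighted_hamming big1 // => i _; rewrite eqxx ?mul0r.
Qed.

Lemma pdist_gt0 dk k (a b : profile k) : a != b -> 0 < pdist dk a b.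
Proof.
move=> neq_ab; have [i neq_i] : exists i, a i != b i.
  apply/existsP; apply: contraR neq_ab => /existsPn eq_ab.
  by apply/eqP/ffunP => i; apply/eqP; rewrite -[_ == _]negbK eq_ab.
case: dk; rewrite /= /hamming /weighted_hamming (bigD1 i) //= neq_i.
  by apply: ltr_wpDr; [apply: sumr_ge0 => j _ | rewrite ltr01].
apply: ltr_wpDr; first by apply: sumr_ge0 => j _; rewrite divr_ge0 ?exprn_ge0.
by rewrite mul1r invr_gt0 exprn_gt0.
Qed.

Variables (dk : dist_kind) (n k : nat) (I : instance n k).

Lemma man_prefers_same_profile (m w w' : 'I_n) :
  profW I w = profM I m -> profW I w' != profM I m -> man_prefers dk I m w w'.
Proof. by move=> eq_w neq_w'; rewrite /man_prefers eq_w pdistxx pdist_gt0 // eq_sym. Qed.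

Lemma woman_prefers_same_profile (w m m' : 'I_n) :
  profM I m = profW I w -> profM I m' != profW I w -> woman_prefers dk I w m m'.
Proof. by move=> eq_m neq_m'; rewrite /woman_prefers eq_m pdistxx pdist_gt0 // eq_sym. Qed.

Lemma blocking_pair_same_profile (mu : 'I_n -> option 'I_n) (m w : 'I_n) :
  profM I m = profW I w ->
  (forall w', mu m = Some w' -> profW I w' != profW I w) ->
  (forall m', mu m' = Some w -> profM I m' != profM I m) ->
  blocking_pair dk I mu m w.
Proof.
move=> eq_mw partner_m partner_w; split.
  rewrite /man_prefers_to_partner; case mu_m: (mu m) => [w'|] //.
  by apply: man_prefers_same_profile; rewrite eq_mw //; apply: partner_m.
rewrite /woman_prefers_to_partner.
case: (boolP [exists m', mu m' == Some w]) => [/existsP[m' /eqP mu_m']|].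
  right; exists m'; split=> //.
  by apply: woman_prefers_same_profile; rewrite -eq_mw //; apply: partner_w.
rewrite negb_exists => /forallP unmatched; left => m' mu_m'.
by move: (unmatched m'); rewrite mu_m' eqxx.
Qed.

End SameProfile.

Theorem lemmaA1 (dk : dist_kind) (n k : nat) (I : instance n k) (a : profile k)
  (hcard : #|[set m : 'I_n | profM I m == a]| <= #|[set w : 'I_n | profW I w == a]|)
  (mu : 'I_n -> option 'I_n) (hst : stable dk I mu) :
  forall m : 'I_n, profM I m = a ->
    exists w : 'I_n, mu m = Some w /\ profW I w = a.
Proof.
move=> m prof_m; have [_ no_blocking] := hst.
case: (boolP [exists w, (mu m == Some w) && (profW I w == a)]).
  by move=> /existsP[w /andP[/eqP mu_m /eqP prof_w]]; exists w.
rewrite negb_exists => /forallP astray.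
have m_out : mu m \notin Some @: [set w | profW I w == a].
  apply/imsetP => -[w]; rewrite inE => prof_w mu_m.
  by move: (astray w); rewrite mu_m prof_w eqxx.
have m_in : m \in [set m | profM I m == a] by rewrite inE prof_m.
have [w] := exists_notin_imset_Some hcard (ex_intro2 _ _ m m_in m_out).
rewrite inE => /eqP prof_w w_free; case: (no_blocking m w).
apply: blocking_pair_same_profile => [|w' mu_m|m' mu_m'].
- by rewrite prof_m prof_w.
- by move: (astray w'); rewrite prof_w mu_m eqxx.
- rewrite prof_m; apply: contraNneq w_free => prof_m'; apply/imsetP.
  by exists m'; rewrite ?inE ?prof_m' ?mu_m'.
Qed.
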